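(* Let $I$ be a $Q$-interval of $\mathcal{P}$ with $D(I)=\{x_1,\ldots,x_r\}$ that is a $b$-nested common interval. Then at most one of the intervals $Int(x_i)$, $1\leq i\leq r$, is $b$-large, and if such an interval exists, it is a $b$-nested common interval.
   Context: Let $n\geq 1$, $K\geq 1$ and let $\mathcal{P}=\{P_1,\ldots,P_K\}$ be permutations of $\{1,\ldots,n\}$ with $P_1=(1,2,\ldots,n)$. For integers $i\leq j$ write $(i..j)=\{i,\ldots,j\}$. A common interval of $\mathcal{P}$ is a set of integers occupying consecutive positions in every $P_k$; all have the form $(i..j)$, and singletons and $(1..n)$ are common. Fix a positive integer $b$. A common interval $I$ is $b$-small if $|I|\leq b$, $b$-large otherwise; it is $b$-nested if $|I|=1$ or $I$ strictly contains a $b$-nested common interval $J$ with $|J|\geq|I|-b$ (recursive on size). Two intervals $(i..j)$, $(k..l)$ overlap if $i<k\leq j<l$ or $k<i\leq l<j$. A common interval is strong if it overlaps no other common interval. The PQ-tree $T$: nodes are the strong common intervals ($Int(x)$ is the interval of node $x$), root $(1..n)$, leaves the singletons, parent of $y$ is the node whose interval is the smallest strong common interval strictly containing $Int(y)$. A node $x$ with children set $D$ is a $P$-node if no union $\bigcup_{z\in D'}Int(z)$, $D'\subset D$, $2\leq|D'|<|D|$, is common; otherwise it is a $Q$-node with children ordered $y_1,\ldots,y_r$ so that $\max Int(y_i)+1=\min Int(y_{i+1})$. It is known that a set is a common interval iff it is $Int(x)$ for a node $x$ or the union of the intervals of consecutive children of a unique $Q$-node. The domain $D(I)$ of a common interval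 $I$ is the set of children of $x$ if $I=Int(x)$ is strong, and otherwise the set of consecutive children of the $Q$-node whose intervals have union $I$. A $P$-interval is a strong common interval $Int(x)$ with $x$ a $P$-node; all other common intervals are $Q$-intervals. *)

(* Intervals (i..j) are encoded as pairs (i, j) of nats. *)
From mathcomp Require Import all_boot.
Set Implicit Arguments. Unset Strict Implicit. Unset Printing Implicit Defensive.

Definition interval := (nat * nat)%type.

Definition in_int (I : interval) (m : nat) : bool := (I.1 <= m) && (m <= I.2).
Definition isize (I : interval) : nat := I.2.+1 - I.1.

Definition all_ints (n : nat) : seq interval :=
  [seq (i, j) | i <- iota 1 n, j <- iota i (n.+1 - i)].

(* the elements of A occupy consecutive positions in the sequence p *)
Definition consec (p A : seq nat) : bool :=
  has (fun s0 => perm_eq (take (size A) (drop s0 p)) A) (iota 0 (size p).+1).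

Section PQ.
Variables (n : nat) (Ps : seq (seq nat)).

Definition common (I : interval) : bool :=
  [&& 1 <= I.1, I.1 <= I.2, I.2 <= n &
      all (fun p => consec p (iota I.1 (isize I))) Ps].

Definition overlap (I J : interval) : bool :=
  ((I.1 < J.1) && (J.1 <= I.2) && (I.2 < J.2)) ||
  ((J.1 < I.1) && (I.1 <= J.2) && (J.2 < I.2)).

Definition strong (I : interval) : bool :=
  common I && all (fun J => ~~ (common J && overlap I J)) (all_ints n).

(* inclusion and strict inclusion of the integer sets (for proper intervals) *)
Definition subint (I J : interval) : bool := (J.1 <= I.1) && (I.2 <= J.2).
Definition psubint (I J : interval) : bool := subint I J && (I != J).

(* y is a child of x in the PQ-tree: x is the smallest strong common interval
   strictly containing y *)
Definition child (x y : interval) : bool :=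
  [&& strong x, strong y, psubint y x &
      all (fun z => (strong z && psubint y z) ==> subint x z) (all_ints n)].

Definition children (x : interval) : seq interval :=
  [seq y <- all_ints n | child x y].

Definition union_is (D : seq interval) (I : interval) : Prop :=
  forall m, in_int I m = has (fun y => in_int y m) D.

Definition union_common (D : seq interval) : Prop :=
  exists I, common I /\ union_is D I.

Definition Pnode (x : interval) : Prop :=
  strong x /\
  forall D', subseq D' (children x) -> 2 <= size D' -> size D' < size (children x) ->
    ~ union_common D'.

Definition Qnode (x : interval) : Prop := strong x /\ ~ Pnode x.

Definition Pinterval (I : interval) : Prop := Pnode I.
Definition Qinterval (I : interval) : Prop := common I /\ ~ Pinterval I.

Definition domain (I : interval) (D : seq interval) : Prop :=
  (strong I /\ D = children I) \/
  (~~ strong I /\ exists x, Qnode x /\ subseq D (children x) /\ union_is D I).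

Definition large (b : nat) (I : interval) : bool := b < isize I.

(* b-nested common intervals (least fixed point = recursion on size) *)
Inductive nested (b : nat) : interval -> Prop :=
| nested_single i : common (i, i) -> nested b (i, i)
| nested_step I J : common I -> nested b J -> psubint J I ->
    isize I <= isize J + b -> nested b I.

End PQ.

From mathcomp Require Import all_boot.
From mathcomp Require Import zify.
Set Implicit Arguments. Unset Strict Implicit.

(* A strong interval never overlaps a common one, so the domain of I consists
   of pairwise disjoint intervals, each of which lies inside, contains, or
   avoids any common interval.  Follow the nesting chain I ⊋ J with
   |I| <= |J| + b: a domain interval avoiding J has size at most b, so every
   b-large one meets J and thus either lies in J (induction on the chain) or
   contains J (and is then b-nested by one step from J).  Two b-large domain
   intervals therefore intersect, and being disjoint or equal they coincide. *)

Definition disjoint_int (y z : interval) : bool := (y.2 < z.1) || (z.2 < y.1).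

Lemma subint_refl I : subint I I.
Proof. by rewrite /subint !leqnn. Qed.

Lemma subint_trans I J K : subint I J -> subint J K -> subint I K.
Proof. rewrite /subint => /andP[? ?] /andP[? ?]; apply/andP; split; lia. Qed.

Lemma subint_anti I J : subint I J -> subint J I -> I = J.
Proof.
case: I J => [i1 i2] [j1 j2]; rewrite /subint /= => /andP[? ?] /andP[? ?].
congr pair; lia.
Qed.

Lemma subint2_not_disjoint w y z :
  w.1 <= w.2 -> subint w y -> subint w z -> ~~ disjoint_int y z.
Proof. rewrite /subint /disjoint_int => ? /andP[? ?] /andP[? ?]; lia. Qed.

Section PQtree.
Variables (n : nat) (Ps : seq (seq nat)).

Lemma common_le I : common n Ps I -> I.1 <= I.2.
Proof. by case/and4P. Qed.

Lemma strong_common I : strong n Ps I -> common n Ps I.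
Proof. by case/andP. Qed.

Lemma strong_le I : strong n Ps I -> I.1 <= I.2.
Proof. by move/strong_common/common_le. Qed.

Lemma common_all_ints I : common n Ps I -> I \in all_ints n.
Proof.
case: I => i j /and4P[/= ? ? ? _].
by apply: (@allpairs_f_dep _ (fun _ => nat) _ pair); rewrite mem_iota; lia.
Qed.

Lemma strong_laminar z J : strong n Ps z -> common n Ps J ->
  [|| subint J z, subint z J | disjoint_int z J].
Proof.
case/andP=> cz /allP noverlap cJ.
have := noverlap _ (common_all_ints cJ); rewrite cJ /=.
have := common_le cz; have := common_le cJ.
case: z {noverlap cz} => z1 z2; case: J {cJ} => j1 j2.
rewrite /overlap /subint /disjoint_int /=; lia.
Qed.

Lemma children_eq_or_disjoint x y z : y \in children n Ps x -> z \in children n Ps x ->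
  y = z \/ disjoint_int y z.
Proof.
rewrite !mem_filter => /andP[/and4P[_ sy /andP[yx y_neq] /allP ymin] _].
move=> /andP[/and4P[_ sz /andP[zx z_neq] /allP zmin] _].
have [-> | yz] := eqVneq y z; first by left.
case/or3P: (strong_laminar sz (strong_common sy)) => [yz_sub | zy_sub | dzy].
- have := ymin z (common_all_ints (strong_common sz)).
  rewrite sz /psubint yz_sub yz /= => xz.
  by move: z_neq; rewrite (subint_anti xz zx) eqxx.
- have := zmin y (common_all_ints (strong_common sy)).
  rewrite sy /psubint zy_sub eq_sym yz /= => xy.
  by move: y_neq; rewrite (subint_anti xy yx) eqxx.
- by right; move: dzy; rewrite /disjoint_int orbC.
Qed.

Lemma union_is_subint D I z : union_is D I -> z \in D -> z.1 <= z.2 -> subint z I.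
Proof.
move=> DI zD zle.
have cover m : in_int z m -> in_int I m by move=> zm; rewrite DI; apply/hasP; exists z.
have := cover z.1; have := cover z.2.
by rewrite /in_int /subint zle !leqnn => /(_ isT)/andP[_ ->] /(_ isT)/andP[->].
Qed.

Lemma domain_children I D : domain n Ps I D ->
  exists x, {subset D <= children n Ps x}.
Proof.
case=> [[_ ->] | [_ [x [_ [sub _]]]]]; first by exists I.
by exists x => z /(mem_subseq sub).
Qed.

Lemma domain_subint I D : domain n Ps I D -> {in D, forall z, subint z I}.
Proof.
case=> [[_ ->] z | [_ [x [_ [sub DI]]]] z zD].
  by rewrite mem_filter => /andP[/and4P[_ _ /andP[]]].
have := mem_subseq sub zD; rewrite mem_filter => /andP[/and4P[_ sz _ _] _].
exact: union_is_subint DI zD (strong_le sz).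
Qed.

Variable b : nat.

Lemma nested_common I : nested n Ps b I -> common n Ps I.
Proof. by case. Qed.

Hypothesis b_gt0 : 0 < b.

Lemma subint_single_small i z : z.1 <= z.2 -> subint z (i, i) -> ~~ large b z.
Proof. rewrite /subint /large /isize /=; lia. Qed.

Lemma disjoint_step_small I J z : z.1 <= z.2 -> subint J I -> isize I <= isize J + b ->
  subint z I -> disjoint_int z J -> ~~ large b z.
Proof. case: J => j1 j2; rewrite /subint /large /isize /disjoint_int /=; lia. Qed.

Lemma nested_step_superset I J z : nested n Ps b J -> common n Ps z ->
  isize I <= isize J + b -> subint J z -> J != z -> subint z I -> nested n Ps b z.
Proof.
move=> nJ cz IJ Jz J_neq zI; apply: (nested_step cz nJ); first by rewrite /psubint Jz J_neq.
by move: IJ zI; rewrite /subint /isize; lia.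
Qed.

Lemma nested_disjoint_family_large I0 : nested n Ps b I0 -> forall D : seq interval,
  {in D, forall z, strong n Ps z /\ subint z I0} ->
  {in D &, forall y z, y = z \/ disjoint_int y z} ->
  {in D &, forall y z, large b y -> large b z -> y = z} /\
  {in D, forall z, large b z -> nested n Ps b z}.
Proof.
elim=> [i _ | I J _ nJ IH /andP[JI J_neq] IJ] D DI Ddisj.
  have small z : z \in D -> ~~ large b z.
    by move=> /DI[/strong_le zle]; apply: subint_single_small.
  by split=> [y z /small/negP | z /small/negP].
have Jle := common_le (nested_common nJ).
pose DJ := [seq z <- D | subint z J].
have [IH_eq IH_nested] : {in DJ &, forall y z, large b y -> large b z -> y = z} /\
                          {in DJ, forall z, large b z -> nested n Ps b z}.
  apply: IH => [z | y z]; rewrite ?mem_filter.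
    by case/andP=> -> /DI[].
  by move=> /andP[_ yD] /andP[_ zD]; apply: Ddisj.
have large_cmp z : z \in D -> large b z -> subint z J \/ subint J z.
  move=> zD zl; have [sz zI] := DI z zD.
  case/or3P: (strong_laminar sz (nested_common nJ)) => [|->|dzJ]; [by right|by left|].
  by move: zl; rewrite (negPf (disjoint_step_small (strong_le sz) JI IJ zI dzJ)).
split=> [y z yD zD yl zl | z zD zl].
  have meet w : w.1 <= w.2 -> subint w y -> subint w z -> y = z.
    move=> wle wy wz; have := subint2_not_disjoint wle wy wz.
    by case: (Ddisj y z yD zD) => // ->.
  have [yle zle] := (strong_le (DI y yD).1, strong_le (DI z zD).1).
  case: (large_cmp y yD yl) => yJ; case: (large_cmp z zD zl) => zJ.
  - by apply: IH_eq; rewrite // mem_filter ?yJ ?zJ.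
  - exact: meet yle (subint_refl y) (subint_trans yJ zJ).
  - exact: meet zle (subint_trans zJ yJ) (subint_refl z).
  - exact: meet Jle yJ zJ.
case: (large_cmp z zD zl) => zJ; first by apply: IH_nested; rewrite // mem_filter zJ.
have [<- // | Jz] := eqVneq J z.
have [sz zI] := DI z zD.
exact: nested_step_superset nJ (strong_common sz) IJ zJ Jz zI.
Qed.

End PQtree.

Theorem lemma4 (n b : nat) (rest : seq (seq nat)) :
  1 <= n -> 0 < b ->
  all (fun p => perm_eq p (iota 1 n)) rest ->
  let Ps := iota 1 n :: rest in
  forall (I : interval) (D : seq interval),
    Qinterval n Ps I -> domain n Ps I D -> nested n Ps b I ->
    (forall y z, y \in D -> z \in D -> large b y -> large b z -> y = z) /\
    (forall y, y \in D -> large b y -> nested n Ps b y).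
Proof.
move=> _ b_gt0 _ Ps I D _ dom nI.
have [x Dx] := domain_children dom.
apply: (nested_disjoint_family_large b_gt0 nI) => [z zD | y z yD zD].
  split; last exact: domain_subint dom z zD.
  by have := Dx z zD; rewrite mem_filter => /andP[/and4P[]].
exact: children_eq_or_disjoint (Dx y yD) (Dx z zD).
Qed.
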